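(* For every $n\ge 0$, a permutation $\pi$ of $\{1,\ldots,n\}$ can be produced as the output of a strictly locked jump queue with input $1,2,\ldots,n$ if and only if $\pi$ avoids both patterns $4231$ and $42513$.
   Context: A permutation $\pi=\pi_1\cdots\pi_n$ contains a pattern $\alpha=\alpha_1\cdots\alpha_k$ (a permutation of $\{1,\ldots,k\}$) if there are indices $i_1<\cdots<i_k$ with $\pi_{i_r}<\pi_{i_s}$ iff $\alpha_r<\alpha_s$; otherwise $\pi$ avoids $\alpha$. Jump queues. The input is $1,2,\ldots,n$, and at each step one may either append the next input element to the rear of the queue, or remove (output) some element of the queue; the sequence of outputs forms a permutation of $1,\ldots,n$ once all elements have been output. The front element of the queue may always be output. Outputting an element other than the front element is called a jump, and an element may jump only if it is not locked. When an element $x$ jumps, every element currently in the queue behind $x$ (closer to the rear) becomes locked; this lock is released at the moment when all elements that were in front of $x$ at the time of the jump have been output. An element is locked as long as at least one lock applying to it is in force. (In particular jumping the rear element locks nothing.) - In a strictly locked jump queue, additionally, any element appended to the queue while the queue contains some locked element is itself locked, and is released under the same condition(s) as those locks. *)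

From mathcomp Require Import all_boot.
Set Implicit Arguments. Unset Strict Implicit. Unset Printing Implicit Defensive.

Definition order_iso (s a : seq nat) : bool :=
  (size s == size a) &&
  [forall r : 'I_(size a), forall t : 'I_(size a),
     (nth 0 s r < nth 0 s t) == (nth 0 a r < nth 0 a t)].

Definition contains (pi alpha : seq nat) : Prop :=
  exists s : seq nat, subseq s pi /\ order_iso s alpha.

Definition avoids (pi alpha : seq nat) : Prop := ~ contains pi alpha.

(* A lock is a pair (F, L): F = the elements that were in front of the
   jumping element at the time of the jump, L = the elements locked by it.
   The lock is in force as long as some element of F is still in the queue
   (elements leave the queue only by being output). *)
Definition lock := (seq nat * seq nat)%type.

Record jq_state := JQ {
  jq_next  : nat;
  jq_queue : seq nat;     (* queue contents, front first *)
  jq_locks : seq lock;    (* all locks created so far *)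
  jq_out   : seq nat
}.

Definition lock_in_force (q : seq nat) (lk : lock) : bool :=
  has (fun f => f \in q) lk.1.

Definition is_locked (q : seq nat) (locks : seq lock) (y : nat) : bool :=
  has (fun lk => lock_in_force q lk && (y \in lk.2)) locks.

Inductive sljq_step (n : nat) : jq_state -> jq_state -> Prop :=
  (* append the next input element to the rear; if the queue contains some
     locked element, the new element becomes locked under the same
     conditions as the locks applying to the locked elements in the queue *)
  | step_push : forall i q locks out,
      i <= n ->
      sljq_step n (JQ i q locks out)
        (JQ i.+1 (rcons q i)
           (if has (is_locked q locks) q then
              [seq (if lock_in_force q lk && has (fun y => y \in q) lk.2
                    then (lk.1, rcons lk.2 i) else lk) | lk <- locks]
            else locks)
           out)
  | step_front : forall i x q locks out,
      sljq_step n (JQ i (x :: q) locks out) (JQ i q locks (rcons out x))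
  (* jump: output a non-front element x that is not locked; every element
     behind x becomes locked until all elements in front of x are output *)
  | step_jump : forall i F x B locks out,
      F != [::] ->
      ~~ is_locked (F ++ x :: B) locks x ->
      sljq_step n (JQ i (F ++ x :: B) locks out)
        (JQ i (F ++ B) (rcons locks (F, B)) (rcons out x)).

Inductive sljq_reach (n : nat) : jq_state -> jq_state -> Prop :=
  | reach_refl : forall s, sljq_reach n s s
  | reach_step : forall s1 s2 s3,
      sljq_step n s1 s2 -> sljq_reach n s2 s3 -> sljq_reach n s1 s3.

Definition sljq_output (n : nat) (pi : seq nat) : Prop :=
  exists locks,
    sljq_reach n (JQ 1 [::] [::] [::]) (JQ n.+1 [::] locks pi).

From Pilot Require Import Defs.
From mathcomp Require Import all_boot zify.
Set Implicit Arguments. Unset Strict Implicit. Unset Printing Implicit Defensive.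

(* Necessity: along any run, whenever the output already contains the [4 2]
   of a would-be pattern [m j] and the queue still holds [a < j < y < m],
   some lock in force has [a] in front and [y] behind it; locks in force lock
   everything behind them that is larger, strict locking extends them to new
   arrivals, and so neither [y] (4231) nor any [x > m] (42513) can be output
   before [a].
   Sufficiency: the greedy run that appends input until the next wanted value
   is queued and then outputs it (from the front or by a jump) works, because
   each lock it creates is witnessed by the [4 2] of a pattern, so a wanted
   value that is locked would complete an occurrence of 4231 or 42513. *)

Definition has4231 (pi : seq nat) := exists m j y a,
  subseq [:: m; j; y; a] pi /\ a < j /\ j < y /\ y < m.

Definition has42513 (pi : seq nat) := exists m j x a y,
  subseq [:: m; j; x; a; y] pi /\ a < j /\ j < y /\ y < m /\ m < x.

Lemma contains_4231_iff pi : contains pi [:: 4; 2; 3; 1] <-> has4231 pi.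
Proof.
split.
- move=> [s [Hs /andP [/eqP Hsz /forallP Hf]]].
  case: s Hs Hsz Hf => [|s0 [|s1 [|s2 [|s3 [|s4 s]]]]] //= Hs _ Hf.
  exists s0, s1, s2, s3; split => //.
  have h := fun r t => (elimT forallP (Hf r)) t.
  move: (h (Ordinal (isT : 3 < 4)) (Ordinal (isT : 1 < 4)))
        (h (Ordinal (isT : 1 < 4)) (Ordinal (isT : 2 < 4)))
        (h (Ordinal (isT : 2 < 4)) (Ordinal (isT : 0 < 4))) => /= /eqP -> /eqP -> /eqP ->.
  done.
- move=> [m [j [y [a [Hs [H1 [H2 H3]]]]]]].
  exists [:: m; j; y; a]; split => //.
  rewrite /order_iso /=; apply/forallP => r; apply/forallP => t.
  case: r => [[|[|[|[|r]]]] //= _]; case: t => [[|[|[|[|t]]]] //= _]; apply/eqP; lia.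
Qed.

Lemma contains_42513_iff pi : contains pi [:: 4; 2; 5; 1; 3] <-> has42513 pi.
Proof.
split.
- move=> [s [Hs /andP [/eqP Hsz /forallP Hf]]].
  case: s Hs Hsz Hf => [|s0 [|s1 [|s2 [|s3 [|s4 [|s5 s]]]]]] //= Hs _ Hf.
  exists s0, s1, s2, s3, s4; split => //.
  have h := fun r t => (elimT forallP (Hf r)) t.
  move: (h (Ordinal (isT : 3 < 5)) (Ordinal (isT : 1 < 5)))
        (h (Ordinal (isT : 1 < 5)) (Ordinal (isT : 4 < 5)))
        (h (Ordinal (isT : 4 < 5)) (Ordinal (isT : 0 < 5)))
        (h (Ordinal (isT : 0 < 5)) (Ordinal (isT : 2 < 5))) => /= /eqP -> /eqP -> /eqP -> /eqP ->.
  done.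
- move=> [m [j [x [a [y [Hs [H1 [H2 [H3 H4]]]]]]]]].
  exists [:: m; j; x; a; y]; split => //.
  rewrite /order_iso /=; apply/forallP => r; apply/forallP => t.
  case: r => [[|[|[|[|[|r]]]]] //= _]; case: t => [[|[|[|[|[|t]]]]] //= _]; apply/eqP; lia.
Qed.

Section SeqFacts.
Variable T : eqType.
Implicit Types (s t F B : seq T) (x y a z : T).

Lemma subseq_rcons_inv s t y x :
  subseq (rcons s y) (rcons t x) -> subseq (rcons s y) t \/ (y = x /\ subseq s t).
Proof.
move=> H; have : subseq (rev (rcons s y)) (rev (rcons t x)) by rewrite subseq_rev.
rewrite !rev_rcons /=.
case: eqP => [->|_] H2; first by right; rewrite subseq_rev in H2.
by left; rewrite -rev_rcons subseq_rev in H2.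
Qed.

Lemma subseq_rcons2 s t x : subseq s t -> subseq (rcons s x) (rcons t x).
Proof. by move=> H; rewrite -!cats1 cat_subseq. Qed.

Lemma subseq_pair_either s a y : a \in s -> y \in s -> a != y ->
  subseq [:: a; y] s \/ subseq [:: y; a] s.
Proof.
elim: s => [//|h s IH]; rewrite !in_cons => Ha Hy Nay.
case: (eqVneq a h) => [Eah|Nah].
  subst h; left; rewrite /= eqxx sub1seq.
  by move: Hy; rewrite eq_sym (negbTE Nay).
case: (eqVneq y h) => [Eyh|Nyh].
  subst h; right; rewrite /= eqxx sub1seq.
  by move: Ha; rewrite (negbTE Nah).
move: Ha Hy; rewrite (negbTE Nah) (negbTE Nyh) /= => Ha Hy.
by case: (IH Ha Hy Nay) => H; [left|right]; apply: subseq_trans H (subseq_cons _ _).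
Qed.

Variable r : rel T.

Lemma pairwise_head x s a : pairwise r (x :: s) -> a \in s -> r x a.
Proof. by rewrite pairwise_cons => /andP [/allP H _] /H. Qed.

Lemma pairwise_pivotl F B x a : pairwise r (F ++ x :: B) -> a \in F -> r a x.
Proof.
rewrite pairwise_cat => /and3P [H _ _] Ha.
by move: H => /allrelP /(_ a x Ha); rewrite mem_head; apply.
Qed.

Lemma pairwise_pivotr F B x z : pairwise r (F ++ x :: B) -> z \in B -> r x z.
Proof.
rewrite pairwise_cat pairwise_cons => /and3P [_ _ /andP [/allP H _]].
exact: H.
Qed.

End SeqFacts.

Lemma reach_trans n s1 s2 s3 :
  sljq_reach n s1 s2 -> sljq_reach n s2 s3 -> sljq_reach n s1 s3.
Proof. by elim=> [//|a b c Hab _ IH] H; exact: reach_step Hab (IH H). Qed.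

Lemma reach_invariant n (P : jq_state -> Prop) :
  (forall s s', sljq_step n s s' -> P s -> P s') ->
  forall s s', sljq_reach n s s' -> P s -> P s'.
Proof. by move=> HP s s'; elim=> [//|a b c Hab _ IH] /(HP _ _ Hab). Qed.

Definition locks_below (i : nat) (locks : seq Defs.lock) :=
  forall lk, lk \in locks -> (forall z, z \in lk.1 -> z < i) /\ (forall z, z \in lk.2 -> z < i).

Record wf_state n (s : jq_state) : Prop := {
  next_bounds : 0 < jq_next s <= n.+1;
  uniq_out_queue : uniq (jq_out s ++ jq_queue s);
  mem_out_queue : forall z, (z \in jq_out s ++ jq_queue s) = (0 < z < jq_next s);
  queue_sorted : pairwise ltn (jq_queue s);
  locks_seen : locks_below (jq_next s) (jq_locks s)
}.

Definition push_locks (i : nat) (q : seq nat) (locks : seq Defs.lock) :=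
  if has (is_locked q locks) q then
    [seq (if lock_in_force q lk && has (fun y => y \in q) lk.2
          then (lk.1, rcons lk.2 i) else lk) | lk <- locks]
  else locks.

Definition lock_extended (q : seq nat) (locks : seq Defs.lock) (lk : Defs.lock) :=
  has (is_locked q locks) q && (lock_in_force q lk && has (fun y => y \in q) lk.2).

Lemma mem_push_locks i q locks lk' : lk' \in push_locks i q locks ->
  exists2 lk, lk \in locks &
    lk' = if lock_extended q locks lk then (lk.1, rcons lk.2 i) else lk.
Proof.
rewrite /push_locks /lock_extended; case: ifP => _ /=; last by exists lk'.
by case/mapP => lk Hlk ->; exists lk.
Qed.

Lemma push_locks_keep i q locks lk : lk \in locks ->
  exists2 lk', lk' \in push_locks i q locks & lk'.1 = lk.1 /\ {subset lk.2 <= lk'.2}.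
Proof.
move=> Hlk; rewrite /push_locks; case: ifP => _; last by exists lk => //; split.
exists (if lock_in_force q lk && has (fun y => y \in q) lk.2
        then (lk.1, rcons lk.2 i) else lk); first exact: map_f.
case: ifP => _ /=; split => // z Hz //; by rewrite mem_rcons in_cons Hz orbT.
Qed.

Section WfState.
Variables (n : nat) (s : jq_state).
Hypothesis wf_s : wf_state n s.

Lemma mem_queue_range z : z \in jq_queue s -> 0 < z < jq_next s.
Proof. by move=> Hz; rewrite -(mem_out_queue wf_s) mem_cat Hz orbT. Qed.

Lemma mem_out_range z : z \in jq_out s -> 0 < z < jq_next s.
Proof. by move=> Hz; rewrite -(mem_out_queue wf_s) mem_cat Hz. Qed.

Lemma out_queue_disjoint z : z \in jq_out s -> z \in jq_queue s -> False.
Proof.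
move=> H1 H2; have := uniq_out_queue wf_s; rewrite cat_uniq => /and3P [_ /hasP H _].
by apply: H; exists z.
Qed.

End WfState.

Lemma wf_init n : wf_state n (JQ 1 [::] [::] [::]).
Proof. by split => //= -[|z]. Qed.

Lemma wf_step n s s' : sljq_step n s s' -> wf_state n s -> wf_state n s'.
Proof.
case=> [i q locks out Hi|i x q locks out|i F x B locks out HF Hx] [/= H1 H2 H3 H4 H5].
- have Hni : i \notin out ++ q by rewrite H3 ltnn andbF.
  split => /=.
  + lia.
  + by rewrite -rcons_cat rcons_uniq Hni.
  + move=> z; rewrite -rcons_cat mem_rcons in_cons H3.
    case: eqP => [->|Hz]; lia.
  + rewrite pairwise_rcons H4 andbT; apply/allP => z Hz.
    by have := H3 z; rewrite mem_cat Hz orbT => /esym /andP [].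
  + move=> lk' /mem_push_locks [lk /H5 [Ha Hb] ->] /=.
    case: ifP => _ /=; split=> z; first by move/Ha; lia.
    * rewrite mem_rcons in_cons; case: eqP => [->|_] //= /Hb; lia.
    * by move/Ha; lia.
    * by move/Hb; lia.
- split => //=.
  + by rewrite cat_rcons.
  + by move=> z; rewrite cat_rcons.
  + by case/andP: H4.
- have Hp : perm_eq (rcons out x ++ (F ++ B)) (out ++ (F ++ x :: B)).
    by rewrite cat_rcons perm_cat2l -cat1s perm_catCA.
  split => /=.
  + lia.
  + by rewrite (perm_uniq Hp).
  + by move=> z; rewrite (perm_mem Hp).
  + apply: subseq_pairwise H4; by rewrite subseq_cat2l -cat1s suffix_subseq.
  + move=> lk; rewrite mem_rcons in_cons => /orP [/eqP -> /=|/H5 //].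
    split=> z Hz; have : z \in out ++ F ++ x :: B by rewrite !mem_cat in_cons Hz !orbT.
    * by rewrite H3 => /andP [].
    * by rewrite H3 => /andP [].
Qed.

Lemma push_locks_grow i q locks lk' : lk' \in push_locks i q locks ->
  exists2 lk, lk \in locks &
    [/\ lk'.1 = lk.1, {subset lk.2 <= lk'.2} & forall z, z \in lk'.2 -> z != i -> z \in lk.2].
Proof.
move=> /mem_push_locks [lk Hlk ->]; exists lk => //.
case: ifP => _ /=; split => //.
- by move=> z Hz; rewrite mem_rcons in_cons Hz orbT.
- by move=> z; rewrite mem_rcons in_cons; case: eqP.
Qed.

Record lock_inv (s : jq_state) : Prop := {
  lock_front_lt : forall lk, lk \in jq_locks s ->
    forall a z, a \in lk.1 -> z \in lk.2 -> a < z;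
  locked_in_queue : forall lk, lk \in jq_locks s -> lock_in_force (jq_queue s) lk ->
    forall z, z \in lk.2 -> z \in jq_queue s;
  locked_upward : forall lk, lk \in jq_locks s -> lock_in_force (jq_queue s) lk ->
    forall w z, w \in lk.2 -> z \in jq_queue s -> w <= z -> z \in lk.2
}.

Lemma lock_inv_push n i q locks out : i <= n ->
  wf_state n (JQ i q locks out) -> lock_inv (JQ i q locks out) ->
  lock_inv (JQ i.+1 (rcons q i) (push_locks i q locks) out).
Proof.
move=> Hi wf [/= Lf Lsub Lup]; have bounds := locks_seen wf.
have inq z : z < i -> z \in rcons q i -> z \in q.
  by rewrite mem_rcons in_cons; case: eqP => [->|//]; rewrite ltnn.
have in_force lk : lk \in locks -> lock_in_force (rcons q i) lk -> lock_in_force q lk.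
  move=> Hlk /hasP [a Ha Haq]; apply/hasP; exists a => //.
  by apply: inq => //; case: (bounds _ Hlk) => /(_ a Ha).
split => /=.
- move=> lk' /push_locks_grow [lk Hlk [-> _ Hs']] a z Ha Hz.
  case: (eqVneq z i) => [->|Nz]; first by case: (bounds _ Hlk) => /(_ a Ha).
  exact: Lf Hlk a z Ha (Hs' z Hz Nz).
- move=> lk' /push_locks_grow [lk Hlk [E _ Hs']] Hf z Hz.
  have Hf0 : lock_in_force q lk by apply: in_force; rewrite // /lock_in_force -E.
  case: (eqVneq z i) => [->|Nz]; first by rewrite mem_rcons mem_head.
  by rewrite mem_rcons in_cons (Lsub lk Hlk Hf0 z (Hs' z Hz Nz)) orbT.
- move=> lk' Hlk' Hf w z Hw Hz Hwz.
  move: (Hlk') => /push_locks_grow [lk Hlk [E Hs Hs']].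
  have Hf0 : lock_in_force q lk by apply: in_force; rewrite // /lock_in_force -E.
  case: (eqVneq z i) => [Ezi|Nzi].
  + (* strict locking: [i] joins every lock in force that locks some element of [q] *)
    subst z; move: Hlk' => /mem_push_locks [lk2 Hlk2 E2].
    case: (boolP (lock_extended q locks lk2)) => Hc; first by rewrite E2 Hc /= mem_rcons mem_head.
    exfalso; rewrite (negbTE Hc) in E2; subst lk'.
    have Hf2 : lock_in_force q lk2 by apply: in_force.
    have Hwq : w \in q := Lsub lk2 Hlk2 Hf2 w Hw.
    move/negP: Hc; apply; rewrite /lock_extended Hf2 /=.
    apply/andP; split; last by apply/hasP; exists w.
    apply/hasP; exists w => //; apply/hasP; exists lk2 => //; by rewrite Hf2 Hw.
  + have zq : z \in q by move: Hz; rewrite mem_rcons in_cons (negbTE Nzi).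
    have Nw : w != i.
      by apply/eqP => Ew; subst w; have := mem_queue_range wf zq; rewrite /=; lia.
    exact: Hs (Lup lk Hlk Hf0 w z (Hs' w Hw Nw) zq Hwz).
Qed.

Lemma lock_inv_front i x q locks out : pairwise ltn (x :: q) ->
  lock_inv (JQ i (x :: q) locks out) -> lock_inv (JQ i q locks (rcons out x)).
Proof.
move=> sorted [/= Lf Lsub Lup].
have sq z : z \in q -> z \in x :: q by move=> Hz; rewrite in_cons Hz orbT.
have in_force lk : lock_in_force q lk -> lock_in_force (x :: q) lk.
  by move=> /hasP [a Ha Haq]; apply/hasP; exists a => //; apply: sq.
split => /=.
- exact: Lf.
- move=> lk Hlk Hf z Hz.
  have := Lsub lk Hlk (in_force _ Hf) z Hz; rewrite in_cons => /orP [/eqP Ez|//].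
  subst z; case/hasP: Hf => a Ha Haq.
  have := Lf lk Hlk a x Ha Hz; have := pairwise_head sorted Haq; lia.
- move=> lk Hlk Hf w z Hw Hz Hwz; exact: Lup lk Hlk (in_force _ Hf) w z Hw (sq z Hz) Hwz.
Qed.

Lemma lock_inv_jump i F x B locks out :
  pairwise ltn (F ++ x :: B) -> ~~ is_locked (F ++ x :: B) locks x ->
  lock_inv (JQ i (F ++ x :: B) locks out) ->
  lock_inv (JQ i (F ++ B) (rcons locks (F, B)) (rcons out x)).
Proof.
move=> sorted Hx [/= Lf Lsub Lup].
have sq z : z \in F ++ B -> z \in F ++ x :: B.
  by rewrite !mem_cat in_cons => /orP [->|->]; rewrite ?orbT.
have in_force lk : lock_in_force (F ++ B) lk -> lock_in_force (F ++ x :: B) lk.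
  by move=> /hasP [a Ha Haq]; apply/hasP; exists a => //; apply: sq.
split => /= lk; rewrite mem_rcons in_cons => /orP [/eqP -> /=|Hlk].
- move=> a z Ha Hz.
  by have := pairwise_pivotl sorted Ha; have := pairwise_pivotr sorted Hz; lia.
- exact: Lf.
- by move=> _ z Hz; rewrite mem_cat Hz orbT.
- move=> Hf z Hz; have := Lsub lk Hlk (in_force _ Hf) z Hz.
  rewrite !mem_cat in_cons => /or3P [->//|/eqP Ez|->]; rewrite ?orbT //.
  subst z; case/negP: Hx; apply/hasP; exists lk => //.
  by rewrite Hz andbT; apply: in_force.
- move=> _ w z Hw; rewrite mem_cat => /orP [Hz|//].
  by have := pairwise_pivotl sorted Hz; have := pairwise_pivotr sorted Hw; lia.
- move=> Hf w z Hw Hz Hwz; exact: Lup lk Hlk (in_force _ Hf) w z Hw (sq z Hz) Hwz.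
Qed.

(* In the field names, the digits before [_] are values already output, in
   this order, and those after it are values still in the queue. *)
Record pattern_inv (s : jq_state) : Prop := {
  lock_42_31 : forall m j a y, subseq [:: m; j] (jq_out s) ->
    a \in jq_queue s -> y \in jq_queue s -> a < j -> j < y -> y < m ->
    exists2 lk, lk \in jq_locks s & (a \in lk.1) && (y \in lk.2);
  no_423_1 : forall m j y a, subseq [:: m; j; y] (jq_out s) -> a \in jq_queue s ->
    a < j -> j < y -> y < m -> False;
  no_425_13 : forall m j x a y, subseq [:: m; j; x] (jq_out s) -> a \in jq_queue s ->
    y \in jq_queue s -> a < j -> j < y -> y < m -> m < x -> False;
  no_4251_3 : forall m j x a y, subseq [:: m; j; x; a] (jq_out s) -> y \in jq_queue s ->
    a < j -> j < y -> y < m -> m < x -> False;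
  no_4231 : forall m j y a, subseq [:: m; j; y; a] (jq_out s) ->
    a < j -> j < y -> y < m -> False;
  no_42513 : forall m j x a y, subseq [:: m; j; x; a; y] (jq_out s) ->
    a < j -> j < y -> y < m -> m < x -> False
}.

Lemma pattern_inv_push n i q locks out : wf_state n (JQ i q locks out) ->
  pattern_inv (JQ i q locks out) ->
  pattern_inv (JQ i.+1 (rcons q i) (push_locks i q locks) out).
Proof.
move=> wf [/= L1 P1 Q1 Q2 F1 F2].
have out_lt z : z \in out -> z < i by move/(mem_out_range wf) => /andP [].
have head_lt m s : subseq (m :: s) out -> m < i.
  by move=> Hs; apply: out_lt; apply: (mem_subseq Hs); rewrite mem_head.
have inq z : z < i -> z \in rcons q i -> z \in q.
  by rewrite mem_rcons in_cons; case: eqP => [->|//]; rewrite ltnn.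
split => //=.
- move=> m j a y Hs Ha Hy Haj Hjy Hym; have mi := head_lt _ _ Hs.
  have [lk Hlk /andP [Ha1 Hy2]] :=
    L1 m j a y Hs (inq a ltac:(lia) Ha) (inq y ltac:(lia) Hy) Haj Hjy Hym.
  have [lk' Hlk' [E Hsub]] := push_locks_keep i q Hlk.
  by exists lk' => //; rewrite E Ha1 (Hsub _ Hy2).
- move=> m j y a Hs Ha Haj Hjy Hym; have mi := head_lt _ _ Hs.
  exact: P1 m j y a Hs (inq a ltac:(lia) Ha) Haj Hjy Hym.
- move=> m j x a y Hs Ha Hy Haj Hjy Hym Hmx; have mi := head_lt _ _ Hs.
  exact: Q1 m j x a y Hs (inq a ltac:(lia) Ha) (inq y ltac:(lia) Hy) Haj Hjy Hym Hmx.
- move=> m j x a y Hs Hy Haj Hjy Hym Hmx; have mi := head_lt _ _ Hs.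
  exact: Q2 m j x a y Hs (inq y ltac:(lia) Hy) Haj Hjy Hym Hmx.
Qed.

Lemma pattern_inv_front i x q locks out : pairwise ltn (x :: q) ->
  pattern_inv (JQ i (x :: q) locks out) -> pattern_inv (JQ i q locks (rcons out x)).
Proof.
move=> sorted [/= L1 P1 Q1 Q2 F1 F2].
have xlt a : a \in q -> x < a := pairwise_head sorted.
have sq z : z \in q -> z \in x :: q by move=> Hz; rewrite in_cons Hz orbT.
have xq : x \in x :: q := mem_head x q.
split => /=.
- move=> m j a y Hs Ha Hy Haj Hjy Hym.
  case: (@subseq_rcons_inv _ [:: m] out j x Hs) => [Hs'|[E Hs']].
    exact: L1 m j a y Hs' (sq a Ha) (sq y Hy) Haj Hjy Hym.
  by subst j; have := xlt a Ha; lia.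
- move=> m j y a Hs Ha Haj Hjy Hym.
  case: (@subseq_rcons_inv _ [:: m; j] out y x Hs) => [Hs'|[E Hs']].
    exact: P1 m j y a Hs' (sq a Ha) Haj Hjy Hym.
  by subst y; have := xlt a Ha; lia.
- move=> m j x' a y Hs Ha Hy Haj Hjy Hym Hmx.
  case: (@subseq_rcons_inv _ [:: m; j] out x' x Hs) => [Hs'|[E Hs']].
    exact: Q1 m j x' a y Hs' (sq a Ha) (sq y Hy) Haj Hjy Hym Hmx.
  by subst x'; have := xlt a Ha; lia.
- move=> m j x' a y Hs Hy Haj Hjy Hym Hmx.
  case: (@subseq_rcons_inv _ [:: m; j; x'] out a x Hs) => [Hs'|[E Hs']].
    exact: Q2 m j x' a y Hs' (sq y Hy) Haj Hjy Hym Hmx.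
  subst a; exact: Q1 m j x' x y Hs' xq (sq y Hy) Haj Hjy Hym Hmx.
- move=> m j y a Hs Haj Hjy Hym.
  case: (@subseq_rcons_inv _ [:: m; j; y] out a x Hs) => [Hs'|[E Hs']].
    exact: F1 m j y a Hs' Haj Hjy Hym.
  subst a; exact: P1 m j y x Hs' xq Haj Hjy Hym.
- move=> m j x' a y Hs Haj Hjy Hym Hmx.
  case: (@subseq_rcons_inv _ [:: m; j; x'; a] out y x Hs) => [Hs'|[E Hs']].
    exact: F2 m j x' a y Hs' Haj Hjy Hym Hmx.
  subst y; exact: Q2 m j x' a x Hs' xq Haj Hjy Hym Hmx.
Qed.

Lemma pattern_inv_jump i F x B locks out :
  pairwise ltn (F ++ x :: B) -> ~~ is_locked (F ++ x :: B) locks x ->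
  lock_inv (JQ i (F ++ x :: B) locks out) -> pattern_inv (JQ i (F ++ x :: B) locks out) ->
  pattern_inv (JQ i (F ++ B) (rcons locks (F, B)) (rcons out x)).
Proof.
move=> sorted Hx [/= _ _ Lup] [/= L1 P1 Q1 Q2 F1 F2].
set Q := F ++ x :: B.
have sq z : z \in F ++ B -> z \in Q.
  by rewrite /Q !mem_cat in_cons => /orP [->|->]; rewrite ?orbT.
have xq : x \in Q by rewrite /Q mem_cat mem_head orbT.
have unlocked lk a : lk \in locks -> a \in lk.1 -> a \in F ++ B -> x \in lk.2 -> False.
  move=> Hlk Ha Haq Hx2; move/negP: Hx; apply; apply/hasP; exists lk => //.
  by rewrite Hx2 andbT; apply/hasP; exists a => //; apply: sq.
split => /=.
- move=> m j a y Hs Ha Hy Haj Hjy Hym.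
  case: (@subseq_rcons_inv _ [:: m] out j x Hs) => [Hs'|[E Hs']].
    have [lk Hlk H] := L1 m j a y Hs' (sq a Ha) (sq y Hy) Haj Hjy Hym.
    by exists lk => //; rewrite mem_rcons in_cons Hlk orbT.
  subst j; exists (F, B); first by rewrite mem_rcons mem_head.
  apply/andP; split.
  - move: Ha; rewrite mem_cat => /orP [//|Ha].
    by have := ltn_trans Haj (pairwise_pivotr sorted Ha); rewrite ltnn.
  - move: Hy; rewrite mem_cat => /orP [Hy|//].
    by have := ltn_trans Hjy (pairwise_pivotl sorted Hy); rewrite ltnn.
- move=> m j y a Hs Ha Haj Hjy Hym.
  case: (@subseq_rcons_inv _ [:: m; j] out y x Hs) => [Hs'|[E Hs']].
    exact: P1 m j y a Hs' (sq a Ha) Haj Hjy Hym.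
  subst y; have [lk Hlk /andP [Ha1 Hx2]] := L1 m j a x Hs' (sq a Ha) xq Haj Hjy Hym.
  exact: unlocked lk a Hlk Ha1 Ha Hx2.
- move=> m j x' a y Hs Ha Hy Haj Hjy Hym Hmx.
  case: (@subseq_rcons_inv _ [:: m; j] out x' x Hs) => [Hs'|[E Hs']].
    exact: Q1 m j x' a y Hs' (sq a Ha) (sq y Hy) Haj Hjy Hym Hmx.
  subst x'; have [lk Hlk /andP [Ha1 Hy2]] := L1 m j a y Hs' (sq a Ha) (sq y Hy) Haj Hjy Hym.
  have Hf : lock_in_force Q lk by apply/hasP; exists a => //; apply: sq.
  have Hx2 := Lup lk Hlk Hf y x Hy2 xq (ltnW (ltn_trans Hym Hmx)).
  exact: unlocked lk a Hlk Ha1 Ha Hx2.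
- move=> m j x' a y Hs Hy Haj Hjy Hym Hmx.
  case: (@subseq_rcons_inv _ [:: m; j; x'] out a x Hs) => [Hs'|[E Hs']].
    exact: Q2 m j x' a y Hs' (sq y Hy) Haj Hjy Hym Hmx.
  subst a; exact: Q1 m j x' x y Hs' xq (sq y Hy) Haj Hjy Hym Hmx.
- move=> m j y a Hs Haj Hjy Hym.
  case: (@subseq_rcons_inv _ [:: m; j; y] out a x Hs) => [Hs'|[E Hs']].
    exact: F1 m j y a Hs' Haj Hjy Hym.
  subst a; exact: P1 m j y x Hs' xq Haj Hjy Hym.
- move=> m j x' a y Hs Haj Hjy Hym Hmx.
  case: (@subseq_rcons_inv _ [:: m; j; x'; a] out y x Hs) => [Hs'|[E Hs']].
    exact: F2 m j x' a y Hs' Haj Hjy Hym Hmx.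
  subst y; exact: Q2 m j x' a x Hs' xq Haj Hjy Hym Hmx.
Qed.

Definition reachable_inv n (s : jq_state) := [/\ wf_state n s, lock_inv s & pattern_inv s].

Lemma reachable_inv_step n s s' : sljq_step n s s' -> reachable_inv n s -> reachable_inv n s'.
Proof.
move=> st [wf LI PI]; split; first exact: wf_step st wf.
- case: st wf LI {PI} => [i q locks out Hi|i x q locks out|i F x B locks out _ Hx] wf.
  + exact: lock_inv_push Hi wf.
  + exact: lock_inv_front (queue_sorted wf).
  + exact: lock_inv_jump (queue_sorted wf) Hx.
- case: st wf LI PI => [i q locks out Hi|i x q locks out|i F x B locks out _ Hx] wf LI.
  + exact: pattern_inv_push wf.
  + exact: pattern_inv_front (queue_sorted wf).
  + exact: pattern_inv_jump (queue_sorted wf) Hx LI.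
Qed.

Lemma sljq_output_avoids n pi : sljq_output n pi ->
  avoids pi [:: 4; 2; 3; 1] /\ avoids pi [:: 4; 2; 5; 1; 3].
Proof.
move=> [locks Hr].
have init : reachable_inv n (JQ 1 [::] [::] [::]) by split; [exact: wf_init|by []..].
have [_ _ [_ _ _ _ F1 F2]] := reach_invariant (@reachable_inv_step n) Hr init.
split.
- by move/contains_4231_iff => [m [j [y [a [Hs [H1 [H2 H3]]]]]]]; exact: F1 Hs H1 H2 H3.
- by move/contains_42513_iff => [m [j [x [a [y [Hs [H1 [H2 [H3 H4]]]]]]]]];
    exact: F2 Hs H1 H2 H3 H4.
Qed.

(* Why [z] may be locked behind [a]: output values [m], [j] (the [4] and [2]
   of a pattern) with [a < j < z], and [z] then plays the [3] of [4231] or,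
   when [m < z], the [5] of [42513] whose [3] is a locked [y] in the queue. *)
Definition lock_witness (out q locked : seq nat) (a z : nat) :=
  exists m j, subseq [:: m; j] out /\ a < j /\ j < z /\
    (z < m \/ exists y, y \in locked /\ y \in q /\ j < y /\ y < m /\ m < z).

Definition locks_witnessed (q : seq nat) (locks : seq Defs.lock) (out : seq nat) :=
  forall lk, lk \in locks -> forall a z, a \in lk.1 -> a \in q -> z \in lk.2 -> z \in q ->
    lock_witness out q lk.2 a z.

Lemma lock_witness_mono out out' q q' L L' a z :
  subseq out out' -> {subset L <= L'} ->
  (forall y, y \in L -> y \in q -> a < y -> y \in q') ->
  lock_witness out q L a z -> lock_witness out' q' L' a z.
Proof.
move=> Ho HL Hq [m [j [Hs [Haj [Hjz H]]]]]; exists m, j; split; first exact: subseq_trans Ho.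
do 2 split => //; case: H => [H|[y [Hy1 [Hy2 [H1 [H2 H3]]]]]]; [by left|right].
exists y; split; first exact: HL Hy1.
split; last by [].
by apply: Hq => //; apply: ltn_trans H1.
Qed.

Record greedy_inv n (s : jq_state) : Prop := {
  greedy_wf : wf_state n s;
  greedy_witnessed : locks_witnessed (jq_queue s) (jq_locks s) (jq_out s)
}.

Lemma greedy_inv_push n i q locks out : i <= n -> greedy_inv n (JQ i q locks out) ->
  greedy_inv n (JQ i.+1 (rcons q i) (push_locks i q locks) out).
Proof.
move=> Hi [wf L]; split; first exact: wf_step (@step_push n i q locks out Hi) wf.
have bounds := locks_seen wf.
have inq z : z < i -> z \in rcons q i -> z \in q.
  by rewrite mem_rcons in_cons; case: eqP => [->|//]; rewrite ltnn.
have sq z : z \in q -> z \in rcons q i by move=> Hz; rewrite mem_rcons in_cons Hz orbT.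
move=> lk' /mem_push_locks [lk Hlk ->] a z.
have [Hb1 Hb2] := bounds _ Hlk.
case: ifP => Hc /= Ha Haq; have aq := inq a (Hb1 a Ha) Haq; last first.
  move=> Hz Hzq; have zq := inq z (Hb2 z Hz) Hzq.
  by apply: lock_witness_mono (L lk Hlk a z Ha aq Hz zq) => // y _ Hy _; exact: sq.
have Lsub : {subset lk.2 <= rcons lk.2 i} by move=> y Hy; rewrite mem_rcons in_cons Hy orbT.
rewrite mem_rcons in_cons => /orP [/eqP Ez|Hz] Hzq; last first.
  have zq := inq z (Hb2 z Hz) Hzq.
  by apply: lock_witness_mono (L lk Hlk a z Ha aq Hz zq) => // y _ Hy _; exact: sq.
(* the newly locked [i] exceeds everything output, so it plays the [5] *)
subst z; case/andP: Hc => _ /andP [_ /hasP [y Hy Hyq]].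
have [m [j [Hs [Haj [Hjy H]]]]] := L lk Hlk a y Ha aq Hy Hyq.
have mi : m < i by have := mem_out_range wf (mem_subseq Hs (mem_head _ _)); case/andP.
have yi : y < i by have := mem_queue_range wf Hyq; case/andP.
exists m, j; do 3 split => //; first exact: ltn_trans Hjy yi.
right; case: H => [Hym|[y' [Hy'1 [Hy'2 [H1' [H2' _]]]]]].
- by exists y; split; [exact: Lsub Hy|split; [exact: sq Hyq|]].
- by exists y'; split; [exact: Lsub Hy'1|split; [exact: sq Hy'2|]].
Qed.

Lemma greedy_push_upto n d : forall i q locks out, greedy_inv n (JQ i q locks out) ->
  i + d <= n.+1 -> exists q' locks',
    sljq_reach n (JQ i q locks out) (JQ (i + d) q' locks' out) /\
    greedy_inv n (JQ (i + d) q' locks' out).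
Proof.
elim: d => [|d IH] i q locks out G Hd.
  by exists q, locks; rewrite addn0; split => //; apply: reach_refl.
have Hi : i <= n by lia.
have [q' [locks' [R G']]] := IH _ _ _ _ (greedy_inv_push Hi G) ltac:(lia).
exists q', locks'; rewrite -addSnnS; split => //.
exact: reach_step (step_push _ _ _ Hi) R.
Qed.

Lemma greedy_output n i q locks out x : greedy_inv n (JQ i q locks out) -> x \in q ->
  ~~ is_locked q locks x ->
  (forall z, z \in q -> x < z -> exists2 m, m \in out & z < m) ->
  exists q' locks', sljq_reach n (JQ i q locks out) (JQ i q' locks' (rcons out x)) /\
    greedy_inv n (JQ i q' locks' (rcons out x)).
Proof.
move=> [wf L] Hx Hnl Hbig; have sorted := queue_sorted wf.
move: sorted wf L Hnl Hbig; case/splitPr: Hx => F Bk sorted wf L Hnl Hbig.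
case: F sorted wf L Hnl Hbig => [|f F] sorted wf L Hnl Hbig.
- have st := @step_front n i x Bk locks out.
  exists Bk, locks; split; first exact: reach_step st (reach_refl _ _).
  split; first exact: wf_step st wf.
  move=> lk Hlk a z Ha Haq Hz Hzq /=.
  have sq z' : z' \in Bk -> z' \in x :: Bk by move=> Hz'; rewrite in_cons Hz' orbT.
  have xa : x < a := pairwise_head sorted Haq.
  apply: lock_witness_mono (L lk Hlk a z Ha (sq a Haq) Hz (sq z Hzq)) => //.
    exact: subseq_rcons.
  move=> y _; rewrite in_cons => /orP [/eqP -> xa'|//].
  by have := ltn_trans xa xa'; rewrite ltnn.
- set FF := f :: F.
  have st := @step_jump n i FF x Bk locks out isT Hnl.
  exists (FF ++ Bk), (rcons locks (FF, Bk)); split; first exact: reach_step st (reach_refl _ _).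
  split; first exact: wf_step st wf.
  have sq z : z \in FF ++ Bk -> z \in FF ++ x :: Bk.
    by rewrite !mem_cat in_cons => /orP [->|->]; rewrite ?orbT.
  move=> lk /=; rewrite mem_rcons in_cons => /orP [/eqP -> /=|Hlk] a z Ha Haq Hz Hzq.
  + have ax := pairwise_pivotl sorted Ha; have xz := pairwise_pivotr sorted Hz.
    have [m Hm zm] := Hbig z (sq z Hzq) xz.
    exists m, x; split; last by split; [|split; [|left]].
    by apply: (@subseq_rcons2 _ [:: m] out x); rewrite sub1seq.
  + apply: lock_witness_mono (L lk Hlk a z Ha (sq a Haq) Hz (sq z Hzq)) => //.
      exact: subseq_rcons.
    move=> y Hy Hyq _; case: (eqVneq y x) => [Ey|Ny].
      subst y; case/negP: Hnl; apply/hasP; exists lk => //.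
      by rewrite Hy andbT /lock_in_force; apply/hasP; exists a => //; apply: sq.
    by move: Hyq; rewrite !(mem_cat, inE) (negbTE Ny) orFb orbA.
Qed.

Section Greedy.
Variables (n : nat) (pi : seq nat).
Hypotheses (pi_perm : perm_eq pi (iota 1 n))
  (avoid4231 : avoids pi [:: 4; 2; 3; 1]) (avoid42513 : avoids pi [:: 4; 2; 5; 1; 3]).

Lemma size_pi : size pi = n.
Proof. by rewrite (perm_size pi_perm) size_iota. Qed.

Lemma greedy_unlocked k i q locks :
  greedy_inv n (JQ i q locks (take k pi)) -> k < size pi ->
  nth 0 pi k \in q -> ~~ is_locked q locks (nth 0 pi k).
Proof.
move=> [wf L] Hk Hxq; set x := nth 0 pi k in Hxq *.
apply/negP => /hasP [lk Hlk /andP [/hasP [a Ha Haq] Hx]].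
have [m [j [Hs [Haj [Hjx H]]]]] := L lk Hlk a x Ha Haq Hx Hxq.
have Hpi : pi = take k pi ++ x :: drop k.+1 pi by rewrite -drop_nth // cat_take_drop.
have in_rest b : b \in q -> b != x -> b \in drop k.+1 pi.
  move=> Hb Nb.
  have : b \in pi.
    rewrite (perm_mem pi_perm) mem_iota.
    by have := mem_queue_range wf Hb; have := next_bounds wf; rewrite /=; lia.
  rewrite {1}Hpi mem_cat in_cons (negbTE Nb) /= => /orP [Hbt|//].
  by case: (out_queue_disjoint wf Hbt Hb).
have build s1 s2 : subseq s1 (take k pi) -> subseq s2 (x :: drop k.+1 pi) ->
    subseq (s1 ++ s2) pi.
  by move=> H1 H2; rewrite [X in subseq _ X]Hpi; apply: cat_subseq.
have ad : a \in drop k.+1 pi by apply: in_rest => //; rewrite neq_ltn (ltn_trans Haj Hjx).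
case: H => [Hxm|[y [_ [Hyq [Hjy [Hym Hmx]]]]]].
- apply: avoid4231; apply/contains_4231_iff; exists m, j, x, a; split; last by [].
  by apply: (build [:: m; j] [:: x; a]) => //=; rewrite eqxx sub1seq.
- have yd : y \in drop k.+1 pi by apply: in_rest => //; rewrite neq_ltn (ltn_trans Hym Hmx).
  have Nay : a != y by rewrite neq_ltn (ltn_trans Haj Hjy).
  case: (subseq_pair_either ad yd Nay) => Hd.
  + apply: avoid42513; apply/contains_42513_iff; exists m, j, x, a, y; split; last by [].
    by apply: (build [:: m; j] [:: x; a; y]) => //=; rewrite eqxx.
  + apply: avoid4231; apply/contains_4231_iff; exists m, j, y, a; split; last by [].
    by apply: (build [:: m; j] [:: y; a]) => //; apply: subseq_trans Hd (subseq_cons _ _).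
Qed.

Lemma greedy_output_next k i q locks : k < n ->
  greedy_inv n (JQ i q locks (take k pi)) -> nth 0 pi k \in q ->
  (forall z, z \in q -> nth 0 pi k < z -> exists2 m, m \in take k pi & z < m) ->
  exists q' locks', sljq_reach n (JQ i q locks (take k pi)) (JQ i q' locks' (take k.+1 pi)) /\
    greedy_inv n (JQ i q' locks' (take k.+1 pi)).
Proof.
move=> Hk G Hx Hbig; have Hk' : k < size pi by rewrite size_pi.
rewrite (take_nth 0 Hk').
exact: greedy_output G Hx (greedy_unlocked G Hk' Hx) Hbig.
Qed.

Lemma nth_queued k i q locks : k < n -> greedy_inv n (JQ i q locks (take k pi)) ->
  nth 0 pi k < i -> nth 0 pi k \in q.
Proof.
move=> Hk [wf _] Hxi; have Hk' : k < size pi by rewrite size_pi.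
have x_pos : 0 < nth 0 pi k.
  by move: (mem_nth 0 Hk'); rewrite (perm_mem pi_perm) mem_iota; case/andP.
have x_new : nth 0 pi k \notin take k pi.
  have := perm_uniq pi_perm; rewrite iota_uniq -{1}(cat_take_drop k pi) (drop_nth 0 Hk').
  by rewrite cat_uniq => /and3P [_ /hasPn /(_ _ (mem_head _ _))].
by have := mem_out_queue wf (nth 0 pi k); rewrite /= mem_cat (negbTE x_new) x_pos Hxi.
Qed.

(* The largest value pushed so far, [i.-1], has already been output, so
   every queued value lies below some output value. *)
Definition pushed_max_output (i : nat) (out : seq nat) := i = 1 \/ i.-1 \in out.

Lemma greedy_step k i q locks : k < n ->
  greedy_inv n (JQ i q locks (take k pi)) -> pushed_max_output i (take k pi) ->
  exists i' q' locks',
    sljq_reach n (JQ i q locks (take k pi)) (JQ i' q' locks' (take k.+1 pi)) /\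
    greedy_inv n (JQ i' q' locks' (take k.+1 pi)) /\ pushed_max_output i' (take k.+1 pi).
Proof.
move=> Hk G Hmax; have Hk' : k < size pi by rewrite size_pi.
have xr : nth 0 pi k <= n.
  by move: (mem_nth 0 Hk'); rewrite (perm_mem pi_perm) mem_iota add1n ltnS => /andP [].
case: (ltnP (nth 0 pi k) i) => Hxi.
- have xq := nth_queued Hk G Hxi.
  have [q' [locks' [R G']]] : exists q' locks',
      sljq_reach n (JQ i q locks (take k pi)) (JQ i q' locks' (take k.+1 pi)) /\
      greedy_inv n (JQ i q' locks' (take k.+1 pi)).
    apply: greedy_output_next => // z Hz _.
    have zr := mem_queue_range (greedy_wf G) Hz.
    case: Hmax => [Ei|Hm]; first by move: zr; rewrite /= Ei; lia.
    exists i.-1 => //.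
    have : z != i.-1 by apply/eqP => E; subst z; exact: (out_queue_disjoint (greedy_wf G) Hm Hz).
    by move: zr => /=; lia.
  exists i, q', locks'; do 2 split => //.
  case: Hmax => [->|Hm]; [by left|right].
  by rewrite (take_nth 0 Hk') mem_rcons in_cons Hm orbT.
- have Hd : i + ((nth 0 pi k).+1 - i) <= n.+1 by lia.
  have [q1 [l1 [R1 G1]]] := greedy_push_upto G Hd.
  have Ei : i + ((nth 0 pi k).+1 - i) = (nth 0 pi k).+1 by lia.
  rewrite Ei in R1 G1.
  have xq := nth_queued Hk G1 (ltnSn _).
  have [q' [locks' [R G']]] : exists q' locks',
      sljq_reach n (JQ (nth 0 pi k).+1 q1 l1 (take k pi))
        (JQ (nth 0 pi k).+1 q' locks' (take k.+1 pi)) /\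
      greedy_inv n (JQ (nth 0 pi k).+1 q' locks' (take k.+1 pi)).
    apply: greedy_output_next => // z Hz Hxz.
    by have := mem_queue_range (greedy_wf G1) Hz; rewrite /=; lia.
  exists (nth 0 pi k).+1, q', locks'; split; first exact: reach_trans R1 R.
  by split => //; right; rewrite /= (take_nth 0 Hk') mem_rcons mem_head.
Qed.

Lemma greedy_prefix k : k <= n -> exists i q locks,
  sljq_reach n (JQ 1 [::] [::] [::]) (JQ i q locks (take k pi)) /\
  greedy_inv n (JQ i q locks (take k pi)) /\ pushed_max_output i (take k pi).
Proof.
elim: k => [|k IH] Hk.
  exists 1, [::], [::]; rewrite take0; split; first exact: reach_refl.
  by split; [split; [exact: wf_init|by []]|left].
have [i [q [locks [R [G Hmax]]]]] := IH (ltnW Hk).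
have [i' [q' [locks' [R' G']]]] := greedy_step Hk G Hmax.
by exists i', q', locks'; split; first exact: reach_trans R R'.
Qed.

Lemma avoids_sljq_output : sljq_output n pi.
Proof.
have [i [q [locks [R [[wf _] _]]]]] := greedy_prefix (leqnn n).
have take_all : take n pi = pi by rewrite -{1}size_pi take_size.
rewrite take_all in R wf.
have Hsub : {subset pi ++ q <= iota 1 i.-1}.
  by move=> z; rewrite (mem_out_queue wf) mem_iota /=; lia.
have := uniq_leq_size (uniq_out_queue wf) Hsub.
rewrite size_cat size_pi size_iota /= => Hle.
have := next_bounds wf; rewrite /= => Hi.
have /size0nil Eq : size q = 0 by lia.
have Ei : i = n.+1 by lia.
by subst q i; exists locks.
Qed.

End Greedy.

Theorem mainTheorem3 (n : nat) (pi : seq nat) :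
  perm_eq pi (iota 1 n) ->
  (sljq_output n pi <->
   (avoids pi [:: 4; 2; 3; 1] /\ avoids pi [:: 4; 2; 5; 1; 3])).
Proof.
move=> pi_perm; split; first exact: sljq_output_avoids.
by case=> avoid4231 avoid42513; exact: avoids_sljq_output.
Qed.
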